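(* An action theory $\Theta=S\cup E\cup X$ is modular if and only if the big model of $\Theta$ is a model of $\Theta$.
   Context: Fix a set $\mathrm{Act}$ of atomic actions and a set $\mathrm{Prop}$ of atoms. Boolean formulas are classical propositional formulas over $\mathrm{Prop}$; $\models_{CPL}$ is classical consequence; a valuation is a maximal consistent set of literals, and $\mathrm{val}(S)$ is the set of valuations satisfying every formula of a set $S$ of Boolean formulas. Modal formulas are built from Boolean formulas using the Boolean connectives and a box $[a]$ for each $a\in\mathrm{Act}$; $\langle a\rangle\Phi:=\neg[a]\neg\Phi$. A PDL-model is $M=\langle W,R\rangle$ where $W$ is a set of valuations (worlds) and $R$ assigns to each $a$ a relation $R_a\subseteq W\times W$; $w\models_M p$ iff $p\in w$, $w\models_M[a]\Phi$ iff $w'\models_M\Phi$ for all $(w,w')\in R_a$, Boolean connectives as usual. $M\models\Phi$ iff $\Phi$ holds at every world of $M$; $M\models\Sigma$ iff $M\models\Phi$ for all $\Phi\in\Sigma$; $\Sigma\models_{PDL}\Phi$ iff every PDL-model of $\Sigma$ is a model of $\Phi$. A static law is a Boolean formula; an effect law for $a$ is $\varphi\to[a]\psi$ and an executability law for $a$ is $\varphi\to\langle a\rangle\top$, with $\varphi,\psi$ Boolean. An action theory is $\Theta=S\cup E\cup X$ with $S$ a set of static laws, $E$ a set of effect laws and $X$ a set of executability laws; $E_a$ denotes the effect laws for $a$. $\Theta$ is modular iff for every Boolean $\varphi$, $\Theta\models_{PDL}\varphi$ implies $S\models_{CPL}\varphi$. The big model of $\Theta$ is $M_{big}=\langle W_{big},R_{big}\rangle$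 with $W_{big}=\mathrm{val}(S)$ and, for each $a$, $(R_{big})_a=\{(w,w')\in W_{big}\times W_{big}:$ for all $\varphi\to[a]\psi\in E_a$, if $w\models\varphi$ then $w'\models\psi\}$. *)

Set Implicit Arguments.

Section Syntax.
Variables (Prp Act : Type).

Inductive bform : Type :=
| BVar : Prp -> bform
| BTop : bform
| BBot : bform
| BNot : bform -> bform
| BAnd : bform -> bform -> bform
| BOr  : bform -> bform -> bform
| BImp : bform -> bform -> bform.

Inductive mform : Type :=
| MB   : bform -> mform
| MNot : mform -> mform
| MAnd : mform -> mform -> mform
| MOr  : mform -> mform -> mform
| MImp : mform -> mform -> mform
| MBox : Act -> mform -> mform.

Definition MDia (a : Act) (F : mform) : mform := MNot (MBox a (MNot F)).

(* A valuation (maximal consistent set of literals) is a total assignment. *)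
Definition valuation := Prp -> bool.

Fixpoint bsat (v : valuation) (f : bform) : Prop :=
  match f with
  | BVar p => v p = true
  | BTop => True
  | BBot => False
  | BNot g => ~ bsat v g
  | BAnd g h => bsat v g /\ bsat v h
  | BOr g h => bsat v g \/ bsat v h
  | BImp g h => bsat v g -> bsat v h
  end.

Definition val (S : bform -> Prop) (v : valuation) : Prop :=
  forall g, S g -> bsat v g.

Definition cpl_entails (S : bform -> Prop) (f : bform) : Prop :=
  forall v, val S v -> bsat v f.

Record pdl_model : Type := {
  W : valuation -> Prop;
  R : Act -> valuation -> valuation -> Prop;
  R_in_W : forall a w w', R a w w' -> W w /\ W w'
}.

Fixpoint msat (M : pdl_model) (w : valuation) (F : mform) : Prop :=
  match F with
  | MB f => bsat w f
  | MNot G => ~ msat M w G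
  | MAnd G H => msat M w G /\ msat M w H
  | MOr G H => msat M w G \/ msat M w H
  | MImp G H => msat M w G -> msat M w H
  | MBox a G => forall w', R M a w w' -> msat M w' G
  end.

Definition valid_in (M : pdl_model) (F : mform) : Prop :=
  forall w, W M w -> msat M w F.

Definition model_of (M : pdl_model) (Sigma : mform -> Prop) : Prop :=
  forall F, Sigma F -> valid_in M F.

Definition pdl_entails (Sigma : mform -> Prop) (F : mform) : Prop :=
  forall M, model_of M Sigma -> valid_in M F.

(* Action theory Theta = S u E u X.
   S : static laws; E a phi psi : "phi -> [a] psi" is an effect law for a;
   X a phi : "phi -> <a>T" is an executability law for a. *)
Definition theory (S : bform -> Prop) (E : Act -> bform -> bform -> Prop)
  (X : Act -> bform -> Prop) (F : mform) : Prop :=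
  (exists f, S f /\ F = MB f)
  \/ (exists a f g, E a f g /\ F = MImp (MB f) (MBox a (MB g)))
  \/ (exists a f, X a f /\ F = MImp (MB f) (MDia a (MB BTop))).

Definition modular (S : bform -> Prop) (E : Act -> bform -> bform -> Prop)
  (X : Act -> bform -> Prop) : Prop :=
  forall f, pdl_entails (theory S E X) (MB f) -> cpl_entails S f.

Definition big_R (S : bform -> Prop) (E : Act -> bform -> bform -> Prop)
  (a : Act) (w w' : valuation) : Prop :=
  val S w /\ val S w' /\ (forall f g, E a f g -> bsat w f -> bsat w' g).

Lemma big_R_in_W (S : bform -> Prop) (E : Act -> bform -> bform -> Prop) :
  forall a w w', big_R S E a w w' -> val S w /\ val S w'.
Proof. intros a w w' [H1 [H2 _]]; split; assumption. Qed.

Definition big_model (S : bform -> Prop) (E : Act -> bform -> bform -> Prop)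
  : pdl_model :=
  {| W := val S; R := big_R S E; R_in_W := @big_R_in_W S E |}.

End Syntax.

(* If the big model is a model of Theta, whatever Theta entails holds in all its
   worlds, which are exactly the valuations of S.  Conversely, the big model
   satisfies the static and effect laws by construction.  Given a world w of the
   big model with w |= phi and phi -> <a>T in X, a successor of w is any
   valuation of S satisfying every psi with phi' -> [a]psi in E and w |= phi'.
   If there were none, by compactness finitely many such psi would already
   contradict S; the conjunction th of their preconditions phi' then satisfies
   Theta |= ~(phi /\ th), because every model of Theta gives worlds satisfying
   phi /\ th a successor satisfying S and those psi.  Modularity turns this into
   S |= ~(phi /\ th), contradicted by w. *)

From Stdlib Require Import List Classical ClassicalEpsilon.
From mathcomp Require classical_sets.

Set Implicit Arguments.

Lemma chain_finite_union (T : Type) (G : T -> Prop) (F : (T -> Prop) -> Prop)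
  (F_total : forall A B, F A -> F B ->
     (forall t, A t -> B t) \/ (forall t, B t -> A t))
  (L : list T) :
  (forall x, In x L -> G x \/ exists2 A, F A & A x) ->
  (forall x, In x L -> G x) \/ exists2 A, F A & forall x, In x L -> G x \/ A x.
Proof.
  induction L as [|y L IH]; intro HL; [left; intros x []|].
  destruct IH as [HG | [A FA HA]]; [intros x hx; apply HL; now right| |].
  - destruct (HL y (or_introl eq_refl)) as [Gy | [B FB By]].
    + left; intros x [<- | hx]; auto.
    + right; exists B; [exact FB|]; intros x [<- | hx]; auto.
  - destruct (HL y (or_introl eq_refl)) as [Gy | [B FB By]].
    + right; exists A; [exact FA|]; intros x [<- | hx]; auto.
    + destruct (F_total A B FA FB) as [AB | BA].
      * right; exists B; [exact FB|]; intros x [<- | hx]; auto.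
        destruct (HA x hx); auto.
      * right; exists A; [exact FA|]; intros x [<- | hx]; auto.
Qed.

Section Compactness.
Variable Prp : Type.

Definition finsat (G : bform Prp -> Prop) : Prop :=
  forall L, (forall x, In x L -> G x) ->
    exists v : valuation Prp, forall x, In x L -> bsat v x.

Lemma not_finsat_add (D : bform Prp -> Prop) (h : bform Prp) :
  ~ finsat (fun g => D g \/ g = h) ->
  exists L, (forall x, In x L -> D x) /\
    forall v, (forall x, In x L -> bsat v x) -> ~ bsat v h.
Proof.
  intro Hnot; apply NNPP; intro Hno; apply Hnot; intros M HM.
  assert (Hsplit : exists L, (forall x, In x L -> D x) /\
            forall v, (forall x, In x L -> bsat v x) -> bsat v h ->
            forall x, In x M -> bsat v x).
  { clear Hno; induction M as [|y M IH].
    - exists nil; split; [intros ? []|intros ? ? ? ? []].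
    - destruct IH as [L [HL HLM]]; [intros x hx; apply HM; now right|].
      destruct (HM y (or_introl eq_refl)) as [Dy | ->].
      + exists (y :: L); split; [intros x [<- | hx]; auto|].
        intros v Hv vh x [<- | hx]; [apply Hv; now left|].
        apply HLM; auto; intros z hz; apply Hv; now right.
      + exists L; split; [exact HL|].
        intros v Hv vh x [<- | hx]; auto. }
  destruct Hsplit as [L [HL HLM]].
  apply NNPP; intro Hunsat; apply Hno; exists L; split; [exact HL|].
  intros v Hv vh; apply Hunsat; exists v; auto.
Qed.

Section MaximalFinsat.
Variable D : bform Prp -> Prop.
Hypothesis D_finsat : finsat D.
Hypothesis D_maximal : forall h, finsat (fun g => D g \/ g = h) -> D h.

Lemma maximal_finsat_complete (h : bform Prp) : D h \/ D (BNot h).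
Proof.
  apply NNPP; intro Hnone.
  destruct (@not_finsat_add D h) as [L1 [HL1 H1]];
    [intro Hh; apply Hnone; left; now apply D_maximal|].
  destruct (@not_finsat_add D (BNot h)) as [L2 [HL2 H2]];
    [intro Hh; apply Hnone; right; now apply D_maximal|].
  destruct (D_finsat (L1 ++ L2)) as [v Hv].
  { intros x hx; apply in_app_or in hx; destruct hx; auto. }
  apply (H2 v); [intros x hx; apply Hv, in_or_app; now right|].
  apply (H1 v); intros x hx; apply Hv, in_or_app; now left.
Qed.

(* Choosing f or ~f according to membership in D and satisfying the chosen
   formulas gives a valuation that decides each listed formula as D does. *)
Lemma maximal_finsat_agree (L : list (bform Prp)) :
  exists w, forall f, In f L -> (bsat w f <-> D f).
Proof.
  destruct (D_finsat (map (fun f => if excluded_middle_informative (D f)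
                                   then f else BNot f) L)) as [w Hw].
  { intros x hx; apply in_map_iff in hx; destruct hx as [f [<- _]].
    destruct (excluded_middle_informative (D f)) as [Df | nDf]; [exact Df|].
    now destruct (maximal_finsat_complete f). }
  exists w; intros f hf.
  specialize (Hw _ (in_map _ _ _ hf)); revert Hw; cbv beta.
  destruct (excluded_middle_informative (D f)); simpl; tauto.
Qed.

Definition membership_valuation : valuation Prp :=
  fun p => if excluded_middle_informative (D (BVar p)) then true else false.

(* Each connective is checked on a valuation agreeing with D on the formula and
   its immediate subformulas. *)
Lemma maximal_finsat_truth (f : bform Prp) : bsat membership_valuation f <-> D f.
Proof.
  induction f as [p| | |g IH|g IHg h IHh|g IHg h IHh|g IHg h IHh]; simpl.
  - unfold membership_valuation.
    destruct (excluded_middle_informative (D (BVar p))); split; auto; discriminate.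
  - destruct (maximal_finsat_agree (BTop Prp :: nil)) as [w Hw].
    rewrite <- (Hw (BTop Prp)) by (simpl; auto); simpl; tauto.
  - destruct (maximal_finsat_agree (BBot Prp :: nil)) as [w Hw].
    rewrite <- (Hw (BBot Prp)) by (simpl; auto); simpl; tauto.
  - destruct (maximal_finsat_agree (BNot g :: g :: nil)) as [w Hw].
    rewrite <- (Hw (BNot g)), IH, <- (Hw g) by (simpl; auto); simpl; tauto.
  - destruct (maximal_finsat_agree (BAnd g h :: g :: h :: nil)) as [w Hw].
    rewrite <- (Hw (BAnd g h)), IHg, IHh, <- (Hw g), <- (Hw h) by (simpl; auto);
      simpl; tauto.
  - destruct (maximal_finsat_agree (BOr g h :: g :: h :: nil)) as [w Hw].
    rewrite <- (Hw (BOr g h)), IHg, IHh, <- (Hw g), <- (Hw h) by (simpl; auto);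
      simpl; tauto.
  - destruct (maximal_finsat_agree (BImp g h :: g :: h :: nil)) as [w Hw].
    rewrite <- (Hw (BImp g h)), IHg, IHh, <- (Hw g), <- (Hw h) by (simpl; auto);
      simpl; tauto.
Qed.

End MaximalFinsat.

Lemma finsat_maximal_extension (G : bform Prp -> Prop) :
  finsat G -> exists D, (forall f, G f -> D f) /\ finsat D /\
    forall h, finsat (fun g => D g \/ g = h) -> D h.
Proof.
  intro HG.
  destruct (@classical_sets.Zorn_bigcup (bform Prp)
              (fun A => finsat (fun f => G f \/ A f))) as [A [HA Hmax]].
  { intros F FP F_total L HL.
    destruct (@chain_finite_union _ G F F_total L HL) as [HLG | [B FB HLB]].
    - exact (HG L HLG).
    - exact (FP B FB L HLB). }
  exists (fun f => G f \/ A f); split; [auto|split; [exact HA|]].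
  intros h Hh; apply NNPP; intro nh.
  apply (Hmax (fun g => A g \/ g = h)); [split|].
  - intros t ht; now left.
  - intro Hsub; apply nh; right; apply Hsub; now right.
  - intros L HL; apply Hh; intros x hx; destruct (HL x hx) as [? | [? | ?]]; auto.
Qed.

Theorem compactness (G : bform Prp -> Prop) :
  finsat G -> exists v, val G v.
Proof.
  intro HG.
  destruct (finsat_maximal_extension HG) as [D [GD [HD Dmax]]].
  eexists; intros f Gf; apply (maximal_finsat_truth HD Dmax), GD, Gf.
Qed.

End Compactness.

Section BigModel.
Variables (Prp Act : Type).
Variables (S : bform Prp -> Prop) (E : Act -> bform Prp -> bform Prp -> Prop)
  (X : Act -> bform Prp -> Prop).

Definition triggered (a : Act) (w : valuation Prp) (psi : bform Prp) : Prop :=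
  exists phi, E a phi psi /\ bsat w phi.

Lemma triggered_by_conj (a : Act) (w : valuation Prp) (L : list (bform Prp)) :
  exists th, bsat w th /\ forall u, bsat u th ->
    forall psi, In psi L -> triggered a w psi -> triggered a u psi.
Proof.
  induction L as [|psi L [th [wth Hth]]]; [exists (BTop Prp); simpl; tauto|].
  destruct (classic (triggered a w psi)) as [[phi [Ephi wphi]] | ntrig].
  - exists (BAnd phi th); split; [simpl; auto|].
    intros u [uphi uth] psi' [<- | hpsi']; [exists phi; auto|]; auto.
  - exists th; split; [exact wth|].
    intros u uth psi' [<- | hpsi']; [contradiction|]; auto.
Qed.

Lemma model_of_theory_successor (M : pdl_model Prp Act) (a : Act)
  (phi : bform Prp) (u : valuation Prp) :
  model_of M (theory S E X) -> X a phi -> W M u -> bsat u phi ->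
  exists u', R M a u u' /\ val S u' /\ forall psi, triggered a u psi -> bsat u' psi.
Proof.
  intros HM Xphi Wu uphi.
  assert (Hexec := HM _ (or_intror (or_intror (ex_intro _ a
                      (ex_intro _ phi (conj Xphi eq_refl))))) u Wu uphi).
  apply NNPP; intro Hno; apply Hexec; intros u' Ru' _.
  apply Hno; exists u'; split; [exact Ru'|split].
  - intros f Sf; destruct (R_in_W M a u u' Ru') as [_ Wu'].
    exact (HM _ (or_introl (ex_intro _ f (conj Sf eq_refl))) u' Wu').
  - intros psi [phi' [Ephi' uphi']].
    exact (HM _ (or_intror (or_introl (ex_intro _ a (ex_intro _ phi'
             (ex_intro _ psi (conj Ephi' eq_refl)))))) u Wu uphi' u' Ru').
Qed.

Lemma modular_big_successor (a : Act) (phi : bform Prp) (w : valuation Prp) :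
  modular S E X -> X a phi -> val S w -> bsat w phi ->
  exists w', big_R S E a w w'.
Proof.
  intros Hmod Xphi Sw wphi.
  assert (Hfin : finsat (fun psi => S psi \/ triggered a w psi)).
  { intros L HL; destruct (triggered_by_conj a w L) as [th [wth Hth]].
    apply NNPP; intro Hunsat.
    assert (Hent : pdl_entails (theory S E X) (MB Act (BNot (BAnd phi th)))).
    { intros M HM u Wu [uphi uth].
      destruct (model_of_theory_successor u HM Xphi Wu uphi) as [u' [_ [Su' Hu']]].
      apply Hunsat; exists u'; intros psi hpsi.
      destruct (HL psi hpsi) as [Spsi | Tpsi]; auto. }
    exact (Hmod _ Hent w Sw (conj wphi wth)). }
  destruct (compactness Hfin) as [w' Hw'].
  exists w'; split; [exact Sw|split].
  - intros f Sf; apply Hw'; now left.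
  - intros phi' psi Ephi' wphi'; apply Hw'; right; now exists phi'.
Qed.

End BigModel.

Theorem theorem3 (Prp Act : Type) (S : bform Prp -> Prop)
  (E : Act -> bform Prp -> bform Prp -> Prop) (X : Act -> bform Prp -> Prop) :
  modular S E X <-> model_of (big_model S E) (theory S E X).
Proof.
  split.
  - intros Hmod F [[f [Sf ->]] | [[a [f [g [Ef ->]]]] | [a [f [Xf ->]]]]];
      intros w Sw; simpl.
    + exact (Sw f Sf).
    + intros wf w' [_ [_ Heff]]; exact (Heff f g Ef wf).
    + intros wf Hnone.
      destruct (modular_big_successor a f Hmod Xf Sw wf) as [w' Rw'].
      exact (Hnone w' Rw' I).
  - intros Hbig f Hent w Sw; exact (Hent _ Hbig w Sw).
Qed.
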